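(* Let $k\ge2$ and $T\ge3$ be integers, and let $a_1,\dots,a_k$ and $b_1,\dots,b_k$ be positive integers with $a_1=b_k=1$ and $a_ib_i\le T$ for all $i$. Set $\Delta=\sum_{i=1}^k a_ib_i$ and $N=\sum_{1\le i\le j\le k}a_ib_j$. Then \[\Delta\le\sqrt{32\,N\,T\ln T}.\] Moreover, this bound is tight up to constant factors. *)

From HB Require Import structures.
From mathcomp Require Import all_boot all_order all_algebra.
From mathcomp Require Import all_classical all_reals exp.
Set Implicit Arguments. Unset Strict Implicit. Unset Printing Implicit Defensive.
Import Order.TTheory GRing.Theory Num.Theory.

(* Sequences a_1..a_k, b_1..b_k are given as functions nat -> nat; only
   indices 1..k matter. *)

Definition Delta (k : nat) (a b : nat -> nat) : nat :=
  \sum_(1 <= i < k.+1) a i * b i.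

Definition Nsum (k : nat) (a b : nat -> nat) : nat :=
  \sum_(1 <= i < k.+1) \sum_(i <= j < k.+1) a i * b j.

Definition admissible (k T : nat) (a b : nat -> nat) : Prop :=
  2 <= k /\ 3 <= T /\
  (forall i, 1 <= i <= k -> 0 < a i /\ 0 < b i) /\
  a 1 = 1 /\ b k = 1 /\
  (forall i, 1 <= i <= k -> a i * b i <= T).

From HB Require Import structures.
From mathcomp Require Import all_boot all_order all_algebra.
From mathcomp Require Import all_classical all_reals exp.
From mathcomp Require Import zify ring lra.
Set Implicit Arguments. Unset Strict Implicit. Unset Printing Implicit Defensive.
Import Order.TTheory GRing.Theory Num.Theory.

(* Group the indices i by the dyadic size trunc_log 2 a_i; as a_i <= a_i b_i <= T
   there are at most trunc_log 2 T + 1 classes.  With p_i = a_i b_i, Cauchy-Schwarz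
   bounds Delta^2 by the number of classes times the sum of p_i p_j over pairs in a
   common class.  For i <= j in one class a_j <= 2 a_i, so p_i p_j <= T a_j b_j
   <= 2 T a_i b_j; summing over ordered pairs gives Delta^2 <= 4 (log2 T + 1) T N.
   Tightness: a_i = 2^(i-1), b_i = 2^(k-i) with k = trunc_log 2 T + 1 give
   Delta = k 2^(k-1) while N <= k 2^k. *)

Lemma sqr_sum_le_card_sum_sqr (J : finType) (x : J -> nat) :
  (\sum_j x j) ^ 2 <= #|J| * \sum_j x j ^ 2.
Proof.
rewrite -(leq_pmul2l (isT : 0 < 2)).
have -> : (\sum_j x j) ^ 2 = \sum_i \sum_j x i * x j.
  by rewrite expnS expn1 big_distrl; apply: eq_bigr => i _; rewrite big_distrr.
have -> : 2 * (#|J| * \sum_j x j ^ 2) = \sum_i \sum_j (x i ^ 2 + x j ^ 2).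
  rewrite [RHS](eq_bigr (fun i => #|J| * x i ^ 2 + \sum_j x j ^ 2)).
    by rewrite big_split /= sum_nat_const -big_distrr mul2n -addnn.
  by move=> i _; rewrite big_split /= sum_nat_const.
rewrite big_distrr leq_sum // => i _; rewrite big_distrr leq_sum // => j _.
exact: (nat_Cauchy _ _).1.
Qed.

Lemma sqr_sum_le_classes (I : eqType) (s : seq I) (L : nat) (f : I -> 'I_L)
    (p : I -> nat) :
  (\sum_(i <- s) p i) ^ 2 <= L * \sum_(i <- s) \sum_(j <- s | f i == f j) p i * p j.
Proof.
pose S (c : 'I_L) := \sum_(i <- s | f i == c) p i.
have -> : \sum_(i <- s) p i = \sum_c S c by rewrite (partition_big f predT).
rewrite -[L in L * _]card_ord; apply: leq_trans (sqr_sum_le_card_sum_sqr S) _.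
rewrite leq_mul2l (partition_big f predT) //=; apply/orP; right.
apply/eq_leq/eq_bigr => c _.
rewrite expnS expn1 big_distrl /=; apply: eq_bigr => i /eqP fic.
by rewrite big_distrr /S; apply: eq_bigl => j; rewrite fic eq_sym.
Qed.

Lemma sum_sym_le_twice_upper (m n : nat) (F : nat -> nat -> nat) :
  (forall i j, F i j = F j i) ->
  \sum_(m <= i < n) \sum_(m <= j < n) F i j <=
    2 * \sum_(m <= i < n) \sum_(i <= j < n) F i j.
Proof.
move=> Fsym.
pose U := \sum_(m <= i < n) \sum_(m <= j < n) (if i <= j then F i j else 0).
have -> : \sum_(m <= i < n) \sum_(i <= j < n) F i j = U.
  apply: eq_big_nat => i /andP[mi _].
  by rewrite (big_nat_widenl _ _ _ _ _ mi) big_mkcond.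
have UT : \sum_(m <= i < n) \sum_(m <= j < n) (if j <= i then F i j else 0) = U.
  by rewrite exchange_big_nat; apply: eq_bigr => i _; apply: eq_bigr => j _; rewrite Fsym.
rewrite mul2n -addnn -{2}UT -big_split; apply: leq_sum => i _.
rewrite -big_split; apply: leq_sum => j _.
by case: (leqP i j) => [_|/ltnW ->]; rewrite ?leq_addr ?leq_addl.
Qed.

Lemma mul_le_of_trunc_log2_eq (T ai bi aj bj : nat) :
  0 < ai -> trunc_log 2 ai = trunc_log 2 aj -> ai * bi <= T ->
  ai * bi * (aj * bj) <= 2 * T * (ai * bj).
Proof.
move=> ai_gt0 eq_log abT.
have aj_le : aj <= 2 * ai.
  apply: ltnW; apply: leq_trans (trunc_log_ltn aj (isT : 1 < 2)) _.
  by rewrite -eq_log expnS leq_mul2l trunc_logP.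
apply: leq_trans (leq_mul abT (leqnn _)) _.
by rewrite (mulnC 2 T) -!mulnA leq_mul2l mulnA leq_mul2r aj_le !orbT.
Qed.

Lemma Delta_sqr_le (k T : nat) (a b : nat -> nat) :
  (forall i, 1 <= i <= k -> 0 < a i /\ 0 < b i) ->
  (forall i, 1 <= i <= k -> a i * b i <= T) ->
  Delta k a b ^ 2 <= (trunc_log 2 T).+1 * (4 * T * Nsum k a b).
Proof.
move=> ab_gt0 abT.
pose f i : 'I_(trunc_log 2 T).+1 := inord (trunc_log 2 (a i)).
have f_val i : 1 <= i <= k -> (f i : nat) = trunc_log 2 (a i).
  move=> ik; rewrite inordK // ltnS leq_trunc_log //.
  by apply: leq_trans (abT i ik); rewrite leq_pmulr; case: (ab_gt0 i ik).
rewrite /Delta; apply: leq_trans (sqr_sum_le_classes _ f _) _; rewrite leq_mul2l; apply/orP; right.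
rewrite (eq_bigr (fun i => \sum_(1 <= j < k.+1)
    (if f i == f j then a i * b i * (a j * b j) else 0))); last first.
  by move=> i _; rewrite big_mkcond.
apply: leq_trans (sum_sym_le_twice_upper _ _ _) _; first by move=> i j; rewrite eq_sym mulnC.
have -> : 4 * T * Nsum k a b = 2 * (2 * T * Nsum k a b) by rewrite !mulnA.
rewrite leq_mul2l /= /Nsum big_distrr /=.
rewrite big_nat_cond [leqRHS]big_nat_cond; apply: leq_sum => i /andP[ik _].
rewrite big_distrr /= big_nat_cond [leqRHS]big_nat_cond.
apply: leq_sum => j /andP[/andP[ij jk] _]; case: eqP => // fij.
have jk' : 1 <= j <= k by lia.
apply: mul_le_of_trunc_log2_eq; [by case: (ab_gt0 i ik) | | exact: abT].
by rewrite -f_val // -f_val // fij.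
Qed.


Definition geom_a (i : nat) := 2 ^ i.-1.
Definition geom_b (k i : nat) := 2 ^ (k - i).

Lemma mul_geom_a_b (k i : nat) : 1 <= i <= k -> geom_a i * geom_b k i = 2 ^ k.-1.
Proof. by move=> ik; rewrite -expnD; congr (_ ^ _); lia. Qed.

Lemma admissible_geom (k T : nat) :
  2 <= k -> 3 <= T -> 2 ^ k.-1 <= T -> admissible k T geom_a (geom_b k).
Proof.
move=> k_ge2 T_ge3 kT; do 2 split=> //.
split; first by move=> i _; rewrite !expn_gt0.
do 2 split=> //; first by rewrite /geom_b subnn.
by move=> i ik; rewrite mul_geom_a_b.
Qed.

Lemma Delta_geom (k : nat) : Delta k geom_a (geom_b k) = k * 2 ^ k.-1.
Proof.
rewrite /Delta (eq_big_nat _ _ (F2 := fun=> 2 ^ k.-1)) ?sum_nat_const_nat ?subn1 //.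
by move=> i /andP[i_ge1 ik]; rewrite mul_geom_a_b ?i_ge1.
Qed.

Lemma sum_pow2_lt (m n : nat) : \sum_(m <= j < n) 2 ^ j < 2 ^ n.
Proof.
have lt0 : \sum_(0 <= j < n) 2 ^ j < 2 ^ n.
  elim: n => [|n IH]; first by rewrite big_geq.
  by rewrite big_nat_recr //= expnS mul2n -addnn ltn_add2r; exact: IH.
apply: leq_ltn_trans _ lt0.
case: (leqP m n) => [mn|nm]; last by rewrite (big_geq (ltnW nm)).
by rewrite [leqRHS](big_cat_nat (leq0n m) mn) leq_addl.
Qed.

Lemma Nsum_geom_le (k : nat) : Nsum k geom_a (geom_b k) <= k * 2 ^ k.
Proof.
have -> : k * 2 ^ k = \sum_(1 <= i < k.+1) 2 ^ k by rewrite sum_nat_const_nat subn1.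
rewrite /Nsum big_nat_cond [leqRHS]big_nat_cond.
apply: leq_sum => i /andP[/andP[i_ge1 ik] _].
rewrite big_nat_rev (eq_big_nat _ _ (F2 := fun j => 2 ^ j.-1)); last first.
  by move=> j /andP[ij jk]; rewrite /geom_a /geom_b -expnD; congr (_ ^ _); lia.
by rewrite -(prednK i_ge1) big_add1 /=; apply/ltnW/sum_pow2_lt.
Qed.

Local Open Scope ring_scope.

Lemma le_sqrt_of_sqr_le (R : rcfType) (x y : R) :
  0 <= x -> x ^+ 2 <= y -> x <= Num.sqrt y.
Proof. by move=> x_ge0 xy; rewrite -[x]ger0_norm // -sqrtr_sqr ler_wsqrtr. Qed.

Lemma ln2_ge_half (R : realType) : 1 / 2 <= ln (2 : R).
Proof.
have := @le_ln1Dx R (- 2^-1) ltac:(lra).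
have -> : 1 + - 2^-1 = (2 : R)^-1 by field.
by rewrite lnV ?posrE //; lra.
Qed.

Lemma ln2_le1 (R : realType) : ln (2 : R) <= 1.
Proof. by have := @le_ln1Dx R 1 ltac:(lra); rewrite (_ : 1 + 1 = 2). Qed.

Lemma ln_natr_pow2 (R : realType) (n : nat) : ln ((2 ^ n)%:R : R) = n%:R * ln 2.
Proof. by rewrite natrX lnXn // mulr_natl. Qed.

Lemma ln_trunc_log2_bounds (R : realType) (T : nat) : (0 < T)%N ->
  (trunc_log 2 T)%:R * ln 2 <= ln (T%:R : R) < (trunc_log 2 T).+1%:R * ln 2.
Proof.
move=> T_gt0; rewrite -!ln_natr_pow2 ler_ln ?ltr_ln ?posrE ?ltr0n ?expn_gt0 //.
by rewrite ler_nat ltr_nat trunc_logP ?trunc_log_ltn.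
Qed.

Lemma Delta_le_sqrt (R : realType) (k T : nat) (a b : nat -> nat) :
  admissible k T a b ->
  (Delta k a b)%:R <= Num.sqrt (32 * (Nsum k a b)%:R * T%:R * ln (T%:R : R)).
Proof.
move=> [_ [T_ge3 [ab_gt0 [_ [_ abT]]]]].
set m := trunc_log 2 T.
have m_ge1 : 1 <= m%:R :> R by rewrite ler1n trunc_log_gt0; lia.
have /andP[lnT_ge _] := ln_trunc_log2_bounds R (ltnW (ltnW T_ge3)); rewrite -/m in lnT_ge.
have logT_le : m.+1%:R <= 4 * ln (T%:R : R).
  have : 0 <= m%:R * (ln 2 - 1 / 2) :> R by rewrite mulr_ge0 ?subr_ge0 ?ln2_ge_half.
  rewrite -[m.+1%:R]natr1; lra.
apply: le_sqrt_of_sqr_le => //; apply: le_trans (_ : (m.+1 * (4 * T * Nsum k a b))%:R <= _).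
  by rewrite -natrX ler_nat Delta_sqr_le.
have NT_ge0 : 0 <= (Nsum k a b)%:R * T%:R :> R by rewrite -natrM.
rewrite !natrM; nra.
Qed.

Lemma sqrt_le_twice_Delta_geom (R : realType) (k T : nat) :
  (0 < T)%N -> (T <= 2 ^ k)%N -> ln (T%:R : R) <= k%:R ->
  Num.sqrt ((Nsum k geom_a (geom_b k))%:R * T%:R * ln (T%:R : R)) <=
    2 * (Delta k geom_a (geom_b k))%:R.
Proof.
move=> T_gt0 T_le lnT_le.
have -> : 2 * (Delta k geom_a (geom_b k))%:R = (k * 2 ^ k)%:R :> R.
  by rewrite Delta_geom -natrM; congr _%:R; case: k {T_le lnT_le} => // k; rewrite expnS /=; lia.
rewrite -[leRHS]ger0_norm // -sqrtr_sqr ler_wsqrtr //.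
have -> : (k * 2 ^ k)%:R ^+ 2 = (k * 2 ^ k * 2 ^ k)%:R * k%:R :> R.
  by rewrite -natrX -natrM mulnAC -mulnA.
apply: ler_pM; rewrite ?mulr_ge0 ?ln_ge0 ?ler1n //.
by rewrite -natrM ler_nat leq_mul ?Nsum_geom_le.
Qed.

Theorem lemma3 (R : realType) :
  (forall (k T : nat) (a b : nat -> nat),
      admissible k T a b ->
      (Delta k a b)%:R <= Num.sqrt (32 * (Nsum k a b)%:R * T%:R * ln (T%:R : R)))
  /\
  (exists c : R, 0 < c /\
     forall T : nat, (3 <= T)%N ->
       exists (k : nat) (a b : nat -> nat),
         admissible k T a b /\
         c * Num.sqrt ((Nsum k a b)%:R * T%:R * ln (T%:R : R)) <= (Delta k a b)%:R).
Proof.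
split; first exact: Delta_le_sqrt.
exists (1 / 2); split=> [|T T_ge3]; first lra.
have T_gt0 : (0 < T)%N by lia.
set k := (trunc_log 2 T).+1.
exists k, geom_a, (geom_b k); split.
  apply: admissible_geom; rewrite // ?trunc_logP //.
  by rewrite ltnS trunc_log_gt0; lia.
have /andP[_ lnT_lt] := ln_trunc_log2_bounds R T_gt0.
have lnT_le : ln (T%:R : R) <= k%:R.
  by apply: ltW (lt_le_trans lnT_lt _); rewrite ler_piMr ?ln2_le1.
have := sqrt_le_twice_Delta_geom T_gt0 (ltnW (trunc_log_ltn T (isT : (1 < 2)%N))) lnT_le.
lra.
Qed.
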